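(* Let $R=K[X_1,\dots,X_d]$ be a polynomial ring over a field $K$ and $f$ a nonzero polynomial in $R$. Then the descending chain of ideals $R\supseteq\sqrt{J_f}\supseteq\sqrt{J_{f^2}}\supseteq\cdots$ eventually stabilizes.
   Context: For a nonzero polynomial $g=\sum_{\mathbf{n}\in\mathbb{N}^d}a_{\mathbf{n}}X_1^{n_1}\cdots X_d^{n_d}\in R$ (with $a_{\mathbf{n}}\in K$), $J_g$ denotes the monomial ideal generated by the monomials $X_1^{n_1}\cdots X_d^{n_d}$ with $a_{\mathbf{n}}\ne0$. *)

From HB Require Import structures.
From mathcomp Require Import all_boot all_algebra.
From mathcomp Require Import mpoly.
Set Implicit Arguments. Unset Strict Implicit. Unset Printing Implicit Defensive.
Import GRing.Theory.
Local Open Scope ring_scope.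

(* Membership in the monomial ideal J_g of R = K[X_1..X_d]: the ideal generated
   by the monomials X^m with m in the support of g (coefficient of X^m in g nonzero). *)
Definition in_Jmon (K : fieldType) (d : nat) (g p : {mpoly K[d]}) : Prop :=
  exists c : 'X_{1..d} -> {mpoly K[d]},
    p = \sum_(m <- msupp g) c m * 'X_[m].

Definition in_rad (K : fieldType) (d : nat) (I : {mpoly K[d]} -> Prop)
  (p : {mpoly K[d]}) : Prop := exists k : nat, I (p ^+ k).

From HB Require Import structures.
From mathcomp Require Import all_boot all_algebra.
From mathcomp Require Import mpoly.
Set Implicit Arguments. Unset Strict Implicit. Unset Printing Implicit Defensive.
Import GRing.Theory.
Local Open Scope ring_scope.

(* In fact sqrt(J_(f^n)) = sqrt(J_f) for every n >= 1.  The inclusion J_(f^n) <= J_f holds because every monomial of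
   f^(n-1) * f is a multiple of a monomial of f.  Conversely, let X^m be a
   monomial of f and kill the variables not occurring in X^m: this ring map
   keeps the coefficient of X^m, so it sends f, hence f^n, to a nonzero
   polynomial.  Thus f^n has a monomial X^b involving only variables of X^m,
   and X^b divides (X^m)^(deg b), so X^m lies in sqrt(J_(f^n)). *)

Definition mnm_support_sub (d : nat) (a m : 'X_{1..d}) : bool :=
  [forall i, (m i == 0%N) ==> (a i == 0%N)].

Lemma mnm_support_sub_le (d : nat) (a m : 'X_{1..d}) :
  mnm_support_sub a m -> (a <= m *+ mdeg a)%MM.
Proof.
move=> /forallP sub_am; apply/mnm_lepP => i; rewrite mulmnE.
have [mi0 | mi_neq0] := eqVneq (m i) 0%N.
  by move: (sub_am i); rewrite mi0 eqxx => /eqP ->.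
apply: (@leq_trans (mdeg a)); last by rewrite leq_pmull // lt0n.
by rewrite mdegE (bigD1 i) //= leq_addr.
Qed.

Section SupportRestriction.
Variables (K : fieldType) (d : nat) (m : 'X_{1..d}).
Implicit Types (a : 'X_{1..d}) (p q : {mpoly K[d]}).

Definition restr_var (i : 'I_d) : {mpoly K[d]} :=
  if m i == 0%N then 0 else 'X_i.

Definition mrestr p : {mpoly K[d]} := mmap (@mpolyC d K) restr_var p.

Lemma mmap1_restr_var a :
  mmap1 restr_var a = if mnm_support_sub a m then 'X_[a] else 0.
Proof.
case: ifPn => [/forallP sub_am | /forallPn [i]].
  rewrite -mmap1_id; apply: eq_bigr => i _; rewrite /restr_var.
  by case: eqP => // mi0; move: (sub_am i); rewrite mi0 => /eqP ->.
rewrite negb_imply => /andP [mi0 ai_neq0].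
by rewrite /mmap1 (bigD1 i) //= /restr_var mi0 expr0n (negbTE ai_neq0) mul0r.
Qed.

Lemma mcoeff_mrestr p a : mnm_support_sub a m -> (mrestr p)@_a = p@_a.
Proof.
move=> sub_am; rewrite {2}(mpolyE p) /mrestr /mmap !raddf_sum /=.
apply: eq_bigr => b _; rewrite mcoeffCM mcoeffZ mmap1_restr_var mcoeffX.
case: ifPn => [_ | sub_bm]; first by rewrite mcoeffX.
have [eq_ba | _] := eqP; last by rewrite mcoeff0 !mulr0.
by move: sub_bm; rewrite eq_ba sub_am.
Qed.

Lemma mrestr_neq0 q :
  mrestr q != 0 -> exists2 b, b \in msupp q & mnm_support_sub b m.
Proof.
have [/hasP [b] | /hasPn none] :=
  boolP (has [pred b | mnm_support_sub b m] (msupp q)); first by exists b.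
rewrite /mrestr /mmap big1_seq ?eqxx // => b /andP [_ /none].
by rewrite mmap1_restr_var => /= /negbTE ->; rewrite mulr0.
Qed.

Lemma msupp_exp_support_sub (f : {mpoly K[d]}) (n : nat) :
  m \in msupp f -> exists2 b, b \in msupp (f ^+ n) & mnm_support_sub b m.
Proof.
move=> m_f; apply: mrestr_neq0; rewrite /mrestr rmorphXn expf_neq0 //.
have sub_mm : mnm_support_sub m m by apply/forallP => i; apply/implyP.
apply: contraTneq m_f => /(congr1 (mcoeff m)); rewrite mcoeff0 -/(mrestr f).
by rewrite mcoeff_mrestr // mcoeff_msupp => ->; rewrite eqxx.
Qed.
End SupportRestriction.

Section Ideal.
Variables (R : comRingType) (I : R -> Prop).
Hypotheses (I0 : I 0) (ID : forall p q, I p -> I q -> I (p + q))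
  (IMl : forall r p, I p -> I (r * p)).

Lemma ideal_sum (T : eqType) (s : seq T) (F : T -> R) :
  {in s, forall x, I (F x)} -> I (\sum_(x <- s) F x).
Proof. by move=> IF; rewrite big_seq; apply: big_ind. Qed.

Lemma ideal_exp_le p k j : (k <= j)%N -> I (p ^+ k) -> I (p ^+ j).
Proof. by move=> le_kj Ipk; rewrite -(subnK le_kj) exprD; apply: IMl. Qed.

Lemma ideal_exprD p q k l :
  I (p ^+ k) -> I (q ^+ l) -> I ((p + q) ^+ (k + l)).
Proof.
move=> Ipk Iql; rewrite exprDn; apply: ideal_sum => i _.
rewrite -mulr_natl; apply: IMl.
have [le_li | lt_il] := leqP l i; first by apply: IMl; apply: ideal_exp_le Iql.
rewrite mulrC; apply: IMl; apply: ideal_exp_le Ipk.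
by rewrite -{1}(addnK l k) leq_sub2l // ltnW.
Qed.
End Ideal.

Section MonomialIdeal.
Variables (K : fieldType) (d : nat).
Implicit Types (f g p q r : {mpoly K[d]}).

Lemma in_Jmon0 g : in_Jmon g 0.
Proof. by exists (fun=> 0); rewrite big1 // => m _; rewrite mul0r. Qed.

Lemma in_JmonD g p q : in_Jmon g p -> in_Jmon g q -> in_Jmon g (p + q).
Proof.
move=> [c ->] [c' ->]; exists (fun m => c m + c' m).
by rewrite -big_split; apply: eq_bigr => m _; rewrite mulrDl.
Qed.

Lemma in_JmonMl g r p : in_Jmon g p -> in_Jmon g (r * p).
Proof.
move=> [c ->]; exists (fun m => r * c m).
by rewrite mulr_sumr; apply: eq_bigr => m _; rewrite mulrA.
Qed.

Lemma in_Jmon_mpolyX g b : b \in msupp g -> in_Jmon g 'X_[b].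
Proof.
move=> b_g; exists (fun m => (m == b)%:R).
rewrite (bigD1_seq b) ?msupp_uniq //= eqxx mul1r big1 ?addr0 // => m /negbTE->.
by rewrite mul0r.
Qed.

Lemma in_Jmon_mulr f q p : in_Jmon (f * q) p -> in_Jmon f p.
Proof.
move=> [c ->]; apply: ideal_sum; [exact: in_Jmon0 | exact: in_JmonD |].
move=> m /msuppM_le /allpairsP [[m1 m2] /= [m1_f _ ->]]; apply: in_JmonMl.
by rewrite addmC mpolyXD; apply: in_JmonMl; apply: in_Jmon_mpolyX.
Qed.
End MonomialIdeal.

Section Radical.
Variables (K : fieldType) (d : nat) (I : {mpoly K[d]} -> Prop).
Implicit Types (g p q r : {mpoly K[d]}).

Lemma in_rad_mono (I' : {mpoly K[d]} -> Prop) p :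
  (forall q, I q -> I' q) -> in_rad I p -> in_rad I' p.
Proof. by move=> sub_II' [k Ipk]; exists k; apply: sub_II'. Qed.

Lemma in_rad_idem p : in_rad (in_rad I) p -> in_rad I p.
Proof. by move=> [k [j Ipkj]]; exists (k * j)%N; rewrite exprM. Qed.

Hypotheses (I0 : I 0) (ID : forall p q, I p -> I q -> I (p + q))
  (IMl : forall r p, I p -> I (r * p)).

Lemma in_rad0 : in_rad I 0.
Proof. by exists 1%N; rewrite expr1. Qed.

Lemma in_radD p q : in_rad I p -> in_rad I q -> in_rad I (p + q).
Proof. by move=> [k Ipk] [l Iql]; exists (k + l)%N; apply: ideal_exprD. Qed.

Lemma in_radMl r p : in_rad I p -> in_rad I (r * p).
Proof. by move=> [k Ipk]; exists k; rewrite exprMn; apply: IMl. Qed.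

Lemma in_rad_Jmon_le g p :
  (forall m, m \in msupp g -> in_rad I 'X_[m]) ->
  in_rad (in_Jmon g) p -> in_rad I p.
Proof.
move=> Xg_rad [k [c Jpk]]; apply: in_rad_idem; exists k; rewrite Jpk.
apply: ideal_sum; [exact: in_rad0 | exact: in_radD |] => m m_g.
by apply: in_radMl; apply: Xg_rad.
Qed.
End Radical.

Lemma mpolyX_in_rad_Jmon_exp (K : fieldType) (d : nat) (f : {mpoly K[d]})
    (n : nat) (m : 'X_{1..d}) :
  m \in msupp f -> in_rad (in_Jmon (f ^+ n)) 'X_[m].
Proof.
move=> m_f; have [b b_fn sub_bm] := msupp_exp_support_sub n m_f.
exists (mdeg b); rewrite mpolyXn -(submK (mnm_support_sub_le sub_bm)) mpolyXD.
by apply: in_JmonMl; apply: in_Jmon_mpolyX.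
Qed.

Lemma in_rad_Jmon_exp (K : fieldType) (d : nat) (f p : {mpoly K[d]})
    (n : nat) :
  (0 < n)%N -> in_rad (in_Jmon (f ^+ n)) p <-> in_rad (in_Jmon f) p.
Proof.
move=> n_gt0; split.
  by apply: in_rad_mono => q; rewrite -(prednK n_gt0) exprS; apply: in_Jmon_mulr.
apply: in_rad_Jmon_le; [exact: in_Jmon0 | exact: in_JmonD | exact: in_JmonMl |].
exact: mpolyX_in_rad_Jmon_exp.
Qed.

Unset Implicit Arguments.
Set Strict Implicit.

Theorem lemma6p2 (K : fieldType) (d : nat) (f : {mpoly K[d]}) (hf : f != 0) :
  exists N : nat, (0 < N)%N /\ forall n : nat, (N <= n)%N ->
    forall p : {mpoly K[d]},
      in_rad (in_Jmon (f ^+ n)) p <-> in_rad (in_Jmon (f ^+ N)) p.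
Proof.
exists 1%N; split => // n n_gt0 p; rewrite expr1.
exact: in_rad_Jmon_exp.
Qed.
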